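(* Let $\lambda>0$, $d_v>0$, $\epsilon\ge0$, $m=\lambda\pi d_v^2$, $k\ge0$, and let $r_1,\dots,r_k\ge0$ be given ranges (the observed ranges $r_i=\|\tilde{\mathbf x}_i\|_2$ at $\mathbf x$), with $f(\mathbf x)$ the set of all orderings of $(r_1,\dots,r_k)$. Put $A_i=\{\mathbf y\in\mathbb R^2:\ |\|\mathbf y\|_2-r_i|\le\epsilon\}$, i.e. $\mathbf b(\mathbf 0,r_i+\epsilon)\setminus\mathbf b(\mathbf 0,r_i-\epsilon)$. Then $$\mathbb P\big[\Delta_s(f(\mathbf x),F(\mathbf 0))\le\epsilon\big]=\frac{m^k}{k!}e^{-m}\cdot\mathbb P\big[\exists\text{ an ordering }(\tilde{\mathbf X}_1,\dots,\tilde{\mathbf X}_k)\text{ of the visible landmarks at }\mathbf 0\text{ with }\tilde{\mathbf X}_i\in A_i\ \forall i\ \big|\ N_{\mathbf 0}=k\big],$$ i.e. $\frac{m^k}{k!}e^{-m}\,\mathbb E\big[\bigvee_{\mathbf R_0\in F(\mathbf 0)}\prod_{i=1}^k\mathbf 1(\tilde{\mathbf X}_i\in A_i)\,\big|\,N_{\mathbf 0}=k\big]$, where $\mathbf R_0=(\|\tilde{\mathbf X}_1\|_2,\dots,\|\tilde{\mathbf X}_k\|_2)$ and $\bigvee$ is logical OR.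
   Context: Landmarks seen from the origin are the points of a homogeneous Poisson point process $\Phi_{\mathbf 0}$ of intensity $\lambda$ on $\mathbb R^2$; a landmark is visible from $\mathbf 0$ if its distance to $\mathbf 0$ is at most $d_v$, and $N_{\mathbf 0}$ is the number of visible landmarks. The random measurement $F(\mathbf 0)$ is the set of all vectors in $\mathbb R^{N_{\mathbf 0}}$ obtained by listing, in some order, the distances from $\mathbf 0$ to the visible landmarks. For vectors, $\Delta_v(\mathbf u,\mathbf w)=\|\mathbf u-\mathbf w\|_\infty$ if they have the same dimension (equal to $0$ if both are empty) and $\infty$ otherwise; for sets of vectors, $\Delta_s(f,F)=\min_{\mathbf u\in f,\mathbf w\in F}\Delta_v(\mathbf u,\mathbf w)$. $\mathbf b(\mathbf c,\rho)$ denotes the Euclidean ball of radius $\rho$ centred at $\mathbf c$ (empty if $\rho<0$). *)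

From HB Require Import structures.
From mathcomp Require Import all_boot all_order all_algebra.
From mathcomp Require Import all_classical all_reals all_analysis.
Set Implicit Arguments. Unset Strict Implicit. Unset Printing Implicit Defensive.
Import Order.TTheory GRing.Theory Num.Theory.
Local Open Scope classical_set_scope.
Local Open Scope ring_scope.

Section PPP.
Variable R : realType.

Definition norm2 (y : R * R) : R := Num.sqrt (y.1 ^+ 2 + y.2 ^+ 2).

Definition leb2 : set (R * R) -> \bar R :=
  (@lebesgue_measure R \x @lebesgue_measure R)%E.

Definition bounded2 (B : set (R * R)) : Prop :=
  exists M : R, forall y, B y -> norm2 y <= M.

Definition count_eq (phi : set (R * R)) (B : set (R * R)) (n : nat) : Prop :=
  exists s : seq (R * R), [/\ uniq s, [set` s] = phi `&` B & size s = n].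

Definition is_homogeneous_PPP (d : measure_display) (Omega : measurableType d)
    (P : probability Omega R) (lam : R) (Phi : Omega -> set (R * R)) : Prop :=
  (forall B, measurable B -> bounded2 B -> forall n : nat,
     measurable [set w | count_eq (Phi w) B n] /\
     P [set w | count_eq (Phi w) B n] =
       ((lam * fine (leb2 B)) ^+ n / n`!%:R * expR (- (lam * fine (leb2 B))))%:E)
  /\
  (forall (n : nat) (B : 'I_n -> set (R * R)) (c : 'I_n -> nat),
     (forall i, measurable (B i) /\ bounded2 (B i)) ->
     (forall i j, i != j -> B i `&` B j = set0) ->
     P (\bigcap_(i in [set: 'I_n]) [set w | count_eq (Phi w) (B i) (c i)]) =
       (\prod_(i < n) P [set w | count_eq (Phi w) (B i) (c i)])%E).

Definition visible (dv : R) (phi : set (R * R)) : set (R * R) :=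
  phi `&` [set y | norm2 y <= dv].

Definition N0_eq (dv : R) (phi : set (R * R)) (k : nat) : Prop :=
  count_eq phi [set y | norm2 y <= dv] k.

(* F(0): all listings, in some order, of the distances to visible landmarks *)
Definition Fmeas (dv : R) (phi : set (R * R)) : set (seq R) :=
  [set u | exists s : seq (R * R),
      [/\ uniq s, [set` s] = visible dv phi & u = map norm2 s]].

Definition fmeas (r : seq R) : set (seq R) := [set u | perm_eq u r].

(* Delta_v: sup-norm distance if same dimension (0 if both empty), else +oo *)
Definition Delta_v (u w : seq R) : \bar R :=
  if size u == size w then
    (\big[Num.max/0]_(i < size u) `|u`_i - w`_i|)%:E
  else +oo%E.

(* Delta_s: minimum over pairs (taken as infimum; +oo on empty sets) *)
Definition Delta_s (f F : set (seq R)) : \bar R :=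
  ereal_inf [set Delta_v p.1 p.2 | p in f `*` F].

Definition annulus (eps ri : R) : set (R * R) :=
  [set y | `| norm2 y - ri | <= eps].

Definition condprob (d : measure_display) (Omega : measurableType d)
    (P : probability Omega R) (A B : set Omega) : R :=
  fine (P (A `&` B)) / fine (P B).

End PPP.

From HB Require Import structures.
From mathcomp Require Import all_boot all_order all_algebra.
From mathcomp Require Import all_classical all_reals all_analysis.
From mathcomp Require Import measurable_realfun ring lra.
Set Implicit Arguments. Unset Strict Implicit. Unset Printing Implicit Defensive.
Import Order.TTheory GRing.Theory Num.Theory.
Import numFieldNormedType.Exports.
Local Open Scope classical_set_scope.
Local Open Scope ring_scope.

(* The event {Delta_s(f(x), F(0)) <= eps} is the event E that the visible
   landmarks can be listed as X_1, ..., X_k with X_i in the annulus A_i: the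
   distances compared by Delta_s form a finite set, so the infimum is attained,
   and a listing matched to a permutation of r can be re-paired with r itself.
   As E lies inside {N_0 = k}, P[E | N_0 = k] = P[E] / P[N_0 = k], and
   P[N_0 = k] = m^k e^-m / k! because the visibility disk has area pi dv^2.
   The delicate point is that E is measurable: sorting points by the set of
   annuli containing them cuts the disk into 2^k regions, and E is the finite
   union, over assignments of such patterns to the indices 1..k, of the events
   that every region holds as many landmarks as the patterns assigned to it. *)

Lemma perm_map_lift (T U : eqType) (f : T -> U) (s : seq T) (t : seq U) :
  perm_eq (map f s) t -> exists2 s', perm_eq s' s & map f s' = t.
Proof.
case: s => [|x0 s0]; first by rewrite perm_sym => /perm_nilP ->; exists [::].
set s := x0 :: s0; rewrite perm_sym => /(perm_iotaP (f x0))[Is permIs ->].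
rewrite size_map in permIs.
exists (map (nth x0 s) Is); first by apply/(perm_iotaP x0); exists Is.
rewrite -map_comp; apply/eq_in_map => i.
by rewrite (perm_mem permIs) mem_iota => /andP[_ ?]; rewrite (nth_map x0).
Qed.

Section enumeration_by_types.
Variables (T : eqType) (I : finType) (typ : T -> I).

Lemma count_map_uniq_fibre (L l : seq T) (t : I) :
  uniq L -> uniq l -> l =i [pred y in L | typ y == t] ->
  count_mem t (map typ L) = size l.
Proof.
move=> uL ul lE; rewrite count_map -size_filter.
apply/perm_size/uniq_perm; [exact: filter_uniq | exact: ul |].
by move=> y; rewrite mem_filter lE inE andbC.
Qed.

Lemma enumeration_with_typesP (X : set T) (ts : seq I) :
  (exists s, [/\ uniq s, [set` s] = X & map typ s = ts]) <->
  (forall t, exists l, [/\ uniq l, [set` l] = X `&` typ @^-1` [set t] &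
                          size l = count_mem t ts]).
Proof.
split=> [[s [us sX <-]] t|fibres].
  exists [seq y <- s | typ y == t]; split; first exact: filter_uniq.
    by rewrite -sX; apply/seteqP; split=> y /=; rewrite mem_filter;
      [case/andP => /eqP | case=> + ->]; rewrite ?eqxx.
  by rewrite size_filter count_map.
have [l lP] := choice fibres.
have mem_l t y : y \in l t <-> X y /\ typ y = t.
  have [_ lt _] := lP t.
  by rewrite (_ : (X y /\ typ y = t) = (X `&` typ @^-1` [set t]) y) // -lt.
(* Any duplicate-free enumeration L of X has the fibre sizes prescribed by ts,
   so [map typ L] is a permutation of ts. *)
pose L := undup (flatten [seq l t | t <- enum I]).
have mem_L y : (y \in L) = `[< X y >].
  apply/idP/asboolP; rewrite mem_undup.
    by move=> /flatten_mapP[t _ /mem_l[]].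
  by move=> Xy; apply/flatten_mapP; exists (typ y); rewrite ?mem_enum //; apply/mem_l.
have [s permsL typs] : exists2 s, perm_eq s L & map typ s = ts.
  apply: perm_map_lift; apply/allP => t _; apply/eqP.
  have [ul _ <-] := lP t; apply: count_map_uniq_fibre; rewrite ?undup_uniq //.
  move=> y; rewrite inE mem_L.
  apply/idP/andP => [/mem_l[Xy <-]|[/asboolP Xy /eqP <-]]; last exact/mem_l.
  by split; first exact/asboolP.
exists s; split => //; first by rewrite (perm_uniq permsL) undup_uniq.
by apply/seteqP; split => y /=; rewrite (perm_mem permsL) mem_L => /asboolP.
Qed.

End enumeration_by_types.

Lemma all2_nthP (S T : Type) (P : S -> T -> bool) (x0 : S) (y0 : T) (s : seq S) (t : seq T) :
  size s = size t ->
  reflect (forall i, (i < size s)%N -> P (nth x0 s i) (nth y0 t i)) (all2 P s t).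
Proof.
move=> eq_sz; rewrite all2E eq_sz eqxx /=.
apply: (iffP (all_nthP (x0, y0))); rewrite size_zip -eq_sz minnn => Pst i /Pst;
  by rewrite nth_zip.
Qed.
Arguments all2_nthP {S T P} x0 y0 {s t}.

Lemma all2_perml (S T : eqType) (P : S -> T -> bool) (u r : seq S) (s : seq T) :
  perm_eq u r -> all2 P u s -> exists2 s', perm_eq s' s & all2 P r s'.
Proof.
move=> perm_ur; rewrite all2E => /andP[/eqP eq_sz Pus].
have [z perm_z zr] : exists2 z, perm_eq z (zip u s) & map fst z = r.
  by apply: perm_map_lift; rewrite -/(unzip1 _) unzip1_zip ?eq_sz.
exists (map snd z).
  by rewrite -[s](@unzip2_zip _ _ u) ?eq_sz //; exact: perm_map.
rewrite all2E -zr !size_map eqxx -/(unzip1 z) -/(unzip2 z) zip_unzip.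
by rewrite (perm_all _ perm_z).
Qed.

Lemma finite_ereal_inf_le (R : realType) (S : set (\bar R)) (x : R) :
  finite_set S -> (ereal_inf S <= x%:E)%E -> exists2 y, S y & (y <= x%:E)%E.
Proof.
move=> /finite_seqP[L ->] infx; apply: contrapT => noy.
pose z := \big[Order.min/+oo%E]_(y <- L | (x%:E < y)%E) y.
have xz : (x%:E < z)%E by apply: lt_bigmin => //; rewrite ltry.
have : (z <= ereal_inf [set` L])%E.
  apply/ereal_infP => y yL; apply: ge_bigmin_seq => //.
  by rewrite ltNge; apply/negP => yx; apply: noy; exists y.
by move=> /le_trans/(_ infx); rewrite leNgt xz.
Qed.

Section measurable_sets_of_the_plane.
Variable R : realType.

Lemma measurable_norm2 : measurable_fun setT (@norm2 R).
Proof.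
rewrite (_ : @norm2 R = Num.sqrt \o (fun y => y.1 ^+ 2 + y.2 ^+ 2)) //.
apply: measurableT_comp; first exact: continuous_measurable_fun (@sqrt_continuous R).
by apply: measurable_funD; apply: measurable_funX; [exact: measurable_fst | exact: measurable_snd].
Qed.

Lemma measurable_disk (rho : R) : measurable [set y : R * R | norm2 y <= rho].
Proof.
rewrite -[X in measurable X]setTI.
exact: measurable_fun_le measurable_norm2 (measurable_cst _).
Qed.

Lemma measurable_annulus (eps ri : R) : measurable (annulus eps ri).
Proof.
rewrite -[X in measurable X]setTI; apply: measurable_fun_le => //.
apply: measurableT_comp; first exact: normr_measurable.
exact: measurable_funB measurable_norm2 (measurable_cst _).
Qed.

End measurable_sets_of_the_plane.

Section disk_area.
Variable R : realType.

Lemma derivable_oo_LRcontinuousT (f : R -> R) (a b : R) :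
  (forall x, derivable f x 1) -> derivable_oo_LRcontinuous f a b.
Proof.
move=> df; split; first by move=> x _; exact: df.
  by apply/cvg_at_right_filter/differentiable_continuous/derivable1_diffP.
by apply/cvg_at_left_filter/differentiable_continuous/derivable1_diffP.
Qed.

Lemma integral_cos_sqr (c : R) :
  (\int[lebesgue_measure]_(x in `[(- (pi / 2))%R, (pi / 2)%R]) (c * cos x ^+ 2)%:E =
   (c * pi / 2)%:E)%E.
Proof.
pose F t : R := c / 2 * (t + sin t * cos t).
have dF (t : R) : is_derive t (1 : R) F (c * cos t ^+ 2).
  have -> : c * cos t ^+ 2 = c / 2 *: (1 + (sin t *: - sin t + cos t *: cos t)).
    by rewrite /GRing.scale /= mulrN -!expr2 sin2cos2; field.
  by apply: is_deriveZ; apply: is_deriveD.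
have pi_half : - (pi / 2) < pi / 2 :> R by have := pi_gt0 R; lra.
have F_oo : derivable_oo_LRcontinuous F (- (pi / 2)) (pi / 2).
  exact: derivable_oo_LRcontinuousT.
have cont : continuous (fun x : R => c * cos x ^+ 2).
  move=> x; apply: (@continuousM _ _ (fun=> c) (fun x => cos x ^+ 2)); first exact: cst_continuous.
  exact: (continuous_comp (@continuous_cos _ x) (@exprn_continuous _ 2 _)).
rewrite (continuous_FTC2 pi_half (continuous_subspaceT cont) F_oo); last first.
  by move=> x _; rewrite derive1E; exact: derive_val.
rewrite /F sinN cosN sin_pihalf cos_pihalf; congr (_%:E); lra.
Qed.

Lemma integral_semicircle (rho : R) : 0 < rho ->
  (\int[lebesgue_measure]_(x in `[(- rho)%R, rho]) (2 * Num.sqrt (rho ^+ 2 - x ^+ 2))%:E =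
   (pi * rho ^+ 2)%:E)%E.
Proof.
move=> rho_gt0.
pose F t : R := rho * sin t.
pose G := (fun=> 2 : R) \* (Num.sqrt \o (fun x : R => rho ^+ 2 - x ^+ 2)).
have dF (t : R) : is_derive t (1 : R) F (rho * cos t) by exact: is_deriveZ.
have F'E : F^`()%classic = fun t => rho * cos t.
  by apply/funext => t; rewrite derive1E; exact: derive_val.
have cF' : continuous F^`()%classic.
  rewrite F'E => t; apply: (@continuousM _ _ (fun=> rho) cos); first exact: cst_continuous.
  exact: continuous_cos.
have cG : continuous G.
  move=> x; apply: continuousM; first exact: cst_continuous.
  apply: (continuous_comp _ (@sqrt_continuous _ _)).
  by apply/differentiable_continuous/derivable1_diffP.
have pi_half : - (pi / 2) <= pi / 2 :> R by have := pi_gt0 R; lra.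
have := @integration_by_substitution_increasing R F G _ _ pi_half.
rewrite /F sinN sin_pihalf mulrN1 mulr1 => ->.
- under eq_integral => t.
    rewrite inE /= in_itv /= => /andP[t_ge t_le].
    have cos_ge0 : 0 <= cos t by apply: cos_ge0_pihalf; rewrite t_ge t_le.
    have sqrt_cos : Num.sqrt (rho ^+ 2 - (rho * sin t) ^+ 2) = rho * cos t.
      rewrite exprMn -[X in X - _]mulr1 -mulrBr -cos2sin2 -exprMn sqrtr_sqr.
      by rewrite ger0_norm // mulr_ge0 // ltW.
    have -> : ((G \o F) * F^`()%classic) t = 2 * rho ^+ 2 * cos t ^+ 2.
      rewrite F'E; change (2 * Num.sqrt (rho ^+ 2 - (rho * sin t) ^+ 2) * (rho * cos t) =
                           2 * rho ^+ 2 * cos t ^+ 2).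
      by rewrite sqrt_cos; ring.
    over.
  by rewrite integral_cos_sqr; congr (_%:E); field.
- by move=> x y xI yI xy; rewrite /= ltr_pM2l // ltr_sin.
- by move=> x _; exact: cF'.
- by apply/cvg_ex; exists (F^`()%classic (- (pi / 2))); apply: cvg_at_right_filter; exact: cF'.
- by apply/cvg_ex; exists (F^`()%classic (pi / 2)); apply: cvg_at_left_filter; exact: cF'.
- exact: derivable_oo_LRcontinuousT.
- exact: continuous_subspaceT.
Qed.

Lemma norm2_le (rho x y : R) : 0 <= rho ->
  (norm2 (x, y) <= rho) = (y ^+ 2 <= rho ^+ 2 - x ^+ 2).
Proof.
move=> rho_ge0; rewrite /norm2 -{1}(ger0_norm rho_ge0) -sqrtr_sqr ler_sqrt ?sqr_ge0 //.
by rewrite -lerBrDl.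
Qed.

(* Num.sqrt vanishes on negative numbers, so the formula also covers |x| > rho. *)
Lemma lebesgue_xsection_disk (rho x : R) : 0 <= rho ->
  lebesgue_measure (xsection [set y : R * R | norm2 y <= rho] x) =
  (2 * Num.sqrt (rho ^+ 2 - x ^+ 2))%:E.
Proof.
move=> rho_ge0; set c := rho ^+ 2 - x ^+ 2.
have sectionE : xsection [set y : R * R | norm2 y <= rho] x = [set y | y ^+ 2 <= c].
  by apply/seteqP; split => y; rewrite /xsection /= inE /= norm2_le.
rewrite sectionE; have [c_ge0|c_lt0] := lerP 0 c.
  have -> : [set y | y ^+ 2 <= c] = `[- Num.sqrt c, Num.sqrt c]%classic.
    apply/seteqP; split => y /=; rewrite in_itv /= -ler_norml -sqrtr_sqr ler_sqrt //.
  rewrite lebesgue_measure_itv /= lte_fin.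
  have [_|le_sqrt] := ltP (- Num.sqrt c) (Num.sqrt c).
    by rewrite opprK -mulr2n mulr_natl.
  by rewrite (_ : Num.sqrt c = 0) ?mulr0 //; have := sqrtr_ge0 c; lra.
rewrite (_ : [set y | y ^+ 2 <= c] = set0) ?measure0.
  by rewrite (_ : Num.sqrt c = 0) ?mulr0 //; apply/eqP; rewrite sqrtr_eq0 ltW.
by apply/seteqP; split => y //= y2c; have := sqr_ge0 y; lra.
Qed.

Lemma leb2_disk (rho : R) : 0 < rho ->
  leb2 [set y : R * R | norm2 y <= rho] = (pi * rho ^+ 2)%:E.
Proof.
move=> rho_gt0; rewrite /leb2 /product_measure1 /= -integral_semicircle //.
rewrite [RHS]integral_mkcond; apply: eq_integral => x _.
rewrite lebesgue_xsection_disk ?ltW // patchE; case: ifPn => // xNI.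
have : rho < `|x|.
  by move: xNI; rewrite notin_setE /= in_itv /= -ler_norml => /negP; rewrite -ltNge.
move=> x_gt; rewrite (_ : Num.sqrt _ = 0) ?mulr0 //; apply/eqP.
by rewrite sqrtr_eq0 subr_le0 -[x ^+ 2]real_normK ?num_real //; nra.
Qed.

End disk_area.

Lemma Delta_v_le (R : realType) (u w : seq R) (x : R) : 0 <= x ->
  (Delta_v u w <= x%:E)%E <->
  size u = size w /\ forall i, (i < size u)%N -> `|u`_i - w`_i| <= x.
Proof.
move=> x_ge0; rewrite /Delta_v; case: eqP => [eq_sz|neq_sz]; last first.
  by rewrite leNgt ltey; split=> // -[].
rewrite lee_fin; split=> [/bigmax_leP[_ le_x]|[_ le_x]].
  by split=> // i ilt; exact: (le_x (Ordinal ilt)).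
by apply: bigmax_le => // i _; exact: le_x.
Qed.

Section listings.
Variables (R : realType) (dv : R).

Lemma Fmeas_perm (phi : set (R * R)) (v w : seq R) :
  Fmeas dv phi v -> Fmeas dv phi w -> perm_eq w v.
Proof.
move=> [s [us sE ->]] [s' [us' s'E ->]]; apply/perm_map/uniq_perm => // y.
by apply/idP/idP => ys;
  [have : [set` s] y by rewrite sE -s'E | have : [set` s'] y by rewrite s'E -sE].
Qed.

Lemma finite_Fmeas (phi : set (R * R)) : finite_set (Fmeas dv phi).
Proof.
have [[v Fv]|noF] := pselect (exists v, Fmeas dv phi v); last first.
  rewrite (_ : Fmeas dv phi = set0) //.
  by apply/seteqP; split => w // Fw; apply: noF; exists w.
apply: (sub_finite_set _ (finite_seq (permutations v))) => w Fw /=.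
by rewrite mem_permutations (Fmeas_perm Fv Fw).
Qed.

Lemma finite_fmeas (r : seq R) : finite_set (fmeas r).
Proof.
apply: (sub_finite_set _ (finite_seq (permutations r))) => u.
by rewrite /fmeas /= mem_permutations.
Qed.

End listings.

Section annuli_events.
Variables (R : realType) (dv eps : R) (r : seq R).

Definition visible_in_annuli (phi : set (R * R)) : Prop :=
  exists s : seq (R * R), [/\ uniq s, [set` s] = visible dv phi, size s = size r &
    forall i, (i < size r)%N -> annulus eps r`_i (nth (0, 0) s i)].

Lemma Delta_s_le_annuliP (phi : set (R * R)) : 0 <= eps ->
  (Delta_s (fmeas r) (Fmeas dv phi) <= eps%:E)%E <-> visible_in_annuli phi.
Proof.
move=> eps_ge0; split; last first.
  case=> s [us sE sz ann]; apply: ge_ereal_inf.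
  exists (Delta_v r (map (@norm2 R) s)).
    by exists (r, map (@norm2 R) s) => //; split; [exact: perm_refl | exists s].
  apply/Delta_v_le => //; rewrite size_map sz; split => // i ilt.
  by rewrite (nth_map (0, 0)) ?sz // distrC; exact: ann.
have finite_Deltas : finite_set [set Delta_v p.1 p.2 | p in fmeas r `*` Fmeas dv phi].
  by apply/finite_image/finite_setX; [exact: finite_fmeas | exact: finite_Fmeas].
case/(finite_ereal_inf_le finite_Deltas) => _ [[u _] [/= perm_ur [s [us sE ->]]] <-].
case/Delta_v_le => // sz le_eps; rewrite size_map in sz.
have /(all2_perml perm_ur)[s' perm_s' ann] : all2 (fun a y => `|norm2 y - a| <= eps) u s.
  apply/(all2_nthP 0 (0, 0) sz) => i ilt.
  by rewrite distrC -(nth_map _ 0) -?sz //; exact: le_eps.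
have sz' : size s' = size r by move: ann; rewrite all2E => /andP[/eqP].
exists s'; split => //; first by rewrite (perm_uniq perm_s').
  by rewrite -sE; apply/seteqP; split=> y /=; rewrite (perm_mem perm_s').
by move: ann => /(all2_nthP 0 (0, 0) (esym sz')).
Qed.

Local Notation pattern := {ffun 'I_(size r) -> bool}.

Definition annuli_pattern (y : R * R) : pattern :=
  [ffun i : 'I_(size r) => `[< annulus eps r`_i y >]].

Definition pattern_region (t : pattern) : set (R * R) :=
  [set y | norm2 y <= dv] `&` annuli_pattern @^-1` [set t].

Lemma measurable_pattern_region t : measurable (pattern_region t).
Proof.
rewrite /pattern_region (_ : annuli_pattern @^-1` _ = \bigcap_(i in [set: 'I_(size r)])
    (if t i then annulus eps r`_i else ~` annulus eps r`_i)); last first.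
  apply/seteqP; split => y /=.
    by move=> <- i _; rewrite ffunE; case: asboolP.
  move=> yt; apply/ffunP => i; rewrite ffunE.
  by have := yt i I; case: (t i) => /=; case: asboolP.
apply: measurableI; first exact: measurable_disk.
apply: fin_bigcap_measurable => // i _.
by case: (t i); [exact: measurable_annulus | apply: measurableC; exact: measurable_annulus].
Qed.

Lemma bounded_pattern_region t : bounded2 (pattern_region t).
Proof. by exists dv => y []. Qed.

Lemma visible_in_annuli_patternsP (phi : set (R * R)) :
  visible_in_annuli phi <->
  exists2 ts : (size r).-tuple pattern,
    forall i, tnth ts i i & forall t, count_eq phi (pattern_region t) (count_mem t ts).
Proof.
have count_eqE t n : count_eq phi (pattern_region t) n <->
    exists l, [/\ uniq l, [set` l] = visible dv phi `&` annuli_pattern @^-1` [set t] &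
                size l = n].
  by rewrite /count_eq /pattern_region /visible setIA.
split.
- case=> s [us sE sz ann].
  have sz_pat : size (map annuli_pattern s) == size r by rewrite size_map sz.
  exists (Tuple sz_pat) => [i|t].
    rewrite (tnth_nth (annuli_pattern (0, 0))) (nth_map (0, 0)) ?sz // ffunE.
    exact/asboolP/ann.
  by apply/count_eqE; move: t; apply/(enumeration_with_typesP annuli_pattern); exists s.
- case=> ts ts_ii counts.
  have [s [us sE pat_s]] : exists s, [/\ uniq s, [set` s] = visible dv phi &
                                       map annuli_pattern s = ts].
    by apply/(enumeration_with_typesP annuli_pattern) => t; apply/count_eqE.
  have sz : size s = size r by rewrite -(size_map annuli_pattern) pat_s size_tuple.
  exists s; split => // i ilt; move: (ts_ii (Ordinal ilt)).
  rewrite (tnth_nth (annuli_pattern (0, 0))) -pat_s (nth_map (0, 0)) ?sz //.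
  by rewrite ffunE => /asboolP.
Qed.

Lemma measurable_visible_in_annuli (d : measure_display) (Omega : measurableType d)
    (Phi : Omega -> set (R * R)) :
  (forall B, measurable B -> bounded2 B -> forall n,
     measurable [set w | count_eq (Phi w) B n]) ->
  measurable [set w | visible_in_annuli (Phi w)].
Proof.
move=> measurable_count.
rewrite (_ : [set w | _] =
    \bigcup_(ts in [set ts : (size r).-tuple pattern | forall i, tnth ts i i])
      \bigcap_(t in [set: pattern])
        [set w | count_eq (Phi w) (pattern_region t) (count_mem t ts)]).
  apply: fin_bigcup_measurable => // ts _; apply: fin_bigcap_measurable => // t _.
  by apply: measurable_count; [exact: measurable_pattern_region | exact: bounded_pattern_region].
apply/seteqP; split => w /=.
  by case/visible_in_annuli_patternsP => ts ts_ii counts; exists ts => // t _; exact: counts.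
by case=> ts ts_ii counts; apply/visible_in_annuli_patternsP; exists ts => // t; exact: counts.
Qed.

End annuli_events.

Theorem lemma9 (R : realType) (d : measure_display) (Omega : measurableType d)
    (P : probability Omega R) (lam dv eps : R) (Phi : Omega -> set (R * R))
    (r : seq R) :
  0 < lam -> 0 < dv -> 0 <= eps ->
  is_homogeneous_PPP P lam Phi ->
  (forall i, (i < size r)%N -> 0 <= r`_i) ->
  let m := lam * pi * dv ^+ 2 in
  let k := size r in
  P [set w | (Delta_s (fmeas r) (Fmeas dv (Phi w)) <= eps%:E)%E] =
    (m ^+ k / k`!%:R * expR (- m) *
     condprob P
       [set w | exists s : seq (R * R),
          [/\ uniq s, [set` s] = visible dv (Phi w), size s = k &
              forall i, (i < k)%N -> annulus eps r`_i (nth (0, 0) s i)]]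
       [set w | N0_eq dv (Phi w) k])%:E.
Proof.
move=> lam_gt0 dv_gt0 eps_ge0 [counts _] _ m k.
have -> : [set w | (Delta_s (fmeas r) (Fmeas dv (Phi w)) <= eps%:E)%E] =
          [set w | visible_in_annuli dv eps r (Phi w)].
  by apply/funext => w; apply/propext/Delta_s_le_annuliP.
have PN : P [set w | N0_eq dv (Phi w) k] = (m ^+ k / k`!%:R * expR (- m))%:E.
  have bounded_disk : bounded2 [set y : R * R | norm2 y <= dv] by exists dv.
  have [_ ->] := counts _ (measurable_disk dv) bounded_disk k.
  by rewrite leb2_disk //= mulrA.
have m_gt0 : 0 < m by rewrite /m !mulr_gt0 ?pi_gt0 ?exprn_gt0.
have PN_gt0 : 0 < m ^+ k / k`!%:R * expR (- m).
  by rewrite !mulr_gt0 ?invr_gt0 ?exprn_gt0 ?expR_gt0 ?ltr0n ?fact_gt0.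
rewrite /condprob setIidl => [|w [s [us sE sz _]]]; last by exists s.
rewrite PN /= mulrC divfK ?gt_eqF // fineK //.
apply/fin_num_measure/measurable_visible_in_annuli => B mB bB n.
exact: (counts B mB bB n).1.
Qed.
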